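(* Let $1<p<\infty$. Every interval preserving operator $T$ on $\ell^p$ (with the coordinatewise order) has a non-trivial closed invariant subspace which is an ideal.
   Context: On $\ell^p$, $x\ge0$ means all coordinates are real and nonnegative; order intervals are $[0,x]=\{y:0\le y\le x\}$. A positive operator $T$ is interval preserving if $T[0,x]=[0,Tx]$ for every $x\ge0$. An ideal is a linear subspace $M$ such that $|x|\le|y|$ coordinatewise and $y\in M$ imply $x\in M$. Non-trivial means different from $\{0\}$ and $\ell^p$. *)

From HB Require Import structures.
From mathcomp Require Import all_boot all_order all_algebra.
From mathcomp Require Import all_classical all_reals all_analysis.
Set Implicit Arguments. Unset Strict Implicit. Unset Printing Implicit Defensive.
Import Order.TTheory GRing.Theory Num.Theory.
Import numFieldNormedType.Exports.
Local Open Scope ring_scope.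
Local Open Scope classical_set_scope.

Section Lp.
Variable R : realType.

Definition rseq := nat -> R.

Definition in_lp (p : R) (x : rseq) : Prop :=
  cvgn (series (fun n => `|x n| `^ p)).

Definition lp_norm (p : R) (x : rseq) : R :=
  (limn (series (fun n => `|x n| `^ p))) `^ p^-1.

Definition seq_nonneg (x : rseq) : Prop := forall n, 0 <= x n.
Definition seq_le (x y : rseq) : Prop := forall n, x n <= y n.

Definition order_interval (x : rseq) : set rseq :=
  [set y | seq_nonneg y /\ seq_le y x].

Definition lp_operator (p : R) (T : rseq -> rseq) : Prop :=
  [/\ (forall x, in_lp p x -> in_lp p (T x)),
      (forall (a : R) x y, in_lp p x -> in_lp p y ->
          T (fun n => a * x n + y n) = (fun n => a * T x n + T y n)) &
      exists C : R, forall x, in_lp p x -> lp_norm p (T x) <= C * lp_norm p x].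

Definition positive_op (p : R) (T : rseq -> rseq) : Prop :=
  forall x, in_lp p x -> seq_nonneg x -> seq_nonneg (T x).

Definition interval_preserving (p : R) (T : rseq -> rseq) : Prop :=
  forall x, in_lp p x -> seq_nonneg x ->
    T @` order_interval x = order_interval (T x).

Definition lp_subspace (p : R) (M : set rseq) : Prop :=
  [/\ M `<=` in_lp p, M (fun _ => 0) &
      forall (a : R) x y, M x -> M y -> M (fun n => a * x n + y n)].

Definition lp_ideal (p : R) (M : set rseq) : Prop :=
  lp_subspace p M /\
  forall x y, (forall n, `|x n| <= `|y n|) -> M y -> M x.

Definition lp_closed (p : R) (M : set rseq) : Prop :=
  forall (u : nat -> rseq) (x : rseq), (forall k, M (u k)) -> in_lp p x ->
    (fun k => lp_norm p (fun n => u k n - x n)) @ \oo --> (0 : R) -> M x.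

Definition T_invariant (T : rseq -> rseq) (M : set rseq) : Prop :=
  forall x, M x -> M (T x).

Definition lp_nontrivial (p : R) (M : set rseq) : Prop :=
  (exists x, M x /\ x <> (fun _ => 0)) /\ (exists x, in_lp p x /\ ~ M x).

End Lp.

From HB Require Import structures.
From mathcomp Require Import all_boot all_order all_algebra.
From mathcomp Require Import all_classical all_reals all_analysis.
From mathcomp Require Import lra.
Import Order.TTheory GRing.Theory Num.Theory.
Import numFieldNormedType.Exports.
Local Open Scope ring_scope.
Local Open Scope classical_set_scope.

(* Let e_n be the n-th unit sequence.  If T is positive and
   interval preserving, then every y in [0, T e_n] is of the form T z with
   0 <= z <= e_n, i.e. y is a multiple of T e_n; taking y to be T e_n cut down
   to a single coordinate shows that T e_n has at most one nonzero coordinate,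
   say s(n).  For A ⊆ ℕ, the band of sequences in l^p vanishing outside A is a
   closed ideal, and it is T-invariant as soon as s maps A into A: T kills the
   coordinates outside A of every finitely supported element of the band, and
   the remaining tail contributes arbitrarily little by continuity of T.  We
   take A = {s(0), s(s(0)), ...}: it is s-stable, contains s(0), and misses
   some natural number (0 itself, or else the orbit of 0 is periodic, hence
   finite), so the band is non-trivial. *)

Section LpSpace.
Context {R : realType}.

Definition unit_seq (n : nat) : rseq R := fun k => (k == n)%:R.
Definition zero_seq : rseq R := fun _ => 0.

Definition truncate (N : nat) (x : rseq R) : rseq R :=
  fun k => if (k < N)%N then x k else 0.
Definition tail_from (N : nat) (x : rseq R) : rseq R :=
  fun k => if (N <= k)%N then x k else 0.

Lemma truncate_add_tail (N : nat) (x : rseq R) :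
  x = (fun k => truncate N x k + tail_from N x k).
Proof.
by apply/funext => k; rewrite /truncate /tail_from; case: ltnP; rewrite ?addr0 ?add0r.
Qed.

Lemma truncateS (N : nat) (x : rseq R) :
  truncate N.+1 x = (fun k => x N * unit_seq N k + truncate N x k).
Proof.
apply/funext => k; rewrite /truncate /unit_seq ltnS.
by case: ltngtP => [|kN|->]; rewrite ?mulr0 ?mulr1 ?add0r ?addr0.
Qed.

Context {p : R}.

Lemma in_lp_dom {x y : rseq R} : 0 <= p ->
  (forall n, `|x n| <= `|y n|) -> in_lp p y -> in_lp p x.
Proof.
move=> p0 xy; apply: series_le_cvg => n; rewrite ?powR_ge0 //.
by apply: ge0_ler_powR; rewrite ?nnegrE.
Qed.

Lemma powR_add_le (u v : R) : 0 <= p -> 0 <= u -> 0 <= v ->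
  (u + v) `^ p <= 2 `^ p * (u `^ p + v `^ p).
Proof.
move=> p0 u0 v0.
wlog uv : u v u0 v0 / u <= v.
  move=> H; case: (leP u v) => [|/ltW vu]; first exact: H.
  by rewrite addrC [u `^ p + _]addrC; apply: H.
apply: (@le_trans _ _ ((2 * v) `^ p)).
  apply: ge0_ler_powR; rewrite ?nnegrE ?addr_ge0 ?mulr_ge0 //.
  by rewrite mulr2n mulrDl mul1r lerD2r.
by rewrite powRM // ler_wpM2l ?powR_ge0 // lerDr powR_ge0.
Qed.

Lemma in_lp_comb (a : R) {x y : rseq R} : 0 <= p ->
  in_lp p x -> in_lp p y -> in_lp p (fun n => a * x n + y n).
Proof.
move=> p0 hx hy.
apply: (@series_le_cvg _ _ ((2 `^ p) *: ((`|a| `^ p) *: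
          (fun n => `|x n| `^ p) + (fun n => `|y n| `^ p)))).
- by move=> n; rewrite powR_ge0.
- by move=> n; rewrite !fctE /= mulr_ge0 ?addr_ge0 ?mulr_ge0 ?powR_ge0.
- move=> n; rewrite !fctE /=.
  apply: (@le_trans _ _ ((`|a * x n| + `|y n|) `^ p)).
    by apply: ge0_ler_powR; rewrite ?nnegrE ?addr_ge0 // ler_normD.
  by rewrite /GRing.scale /= -powRM // -normrM; exact: powR_add_le.
- apply: (@is_cvg_seriesZ R _ (2 `^ p)); apply: is_cvg_seriesD => //.
  exact: (@is_cvg_seriesZ R _ (`|a| `^ p)).
Qed.

Hypothesis p_gt0 : 0 < p.

Lemma in_lp_unit_seq (n : nat) : in_lp p (unit_seq n).
Proof.
have pow_e : (fun k => `|unit_seq n k| `^ p) = unit_seq n.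
  apply/funext => k; rewrite /unit_seq; case: (k == n).
    by rewrite normr1 powR1.
  by rewrite normr0 powR0 // gt_eqF.
have partial_sum k : series (unit_seq n) k = (n < k)%:R.
  elim: k => [|k IH]; first by rewrite /series /= big_geq.
  rewrite seriesSr IH /unit_seq; case: ltngtP => [nk|kn|->].
  - by rewrite addr0 ltnS ltnW.
  - by rewrite addr0 ltnS leqNgt kn.
  - by rewrite add0r ltnSn.
rewrite /in_lp pow_e; apply/cvg_ex; exists 1; apply: cvg_near_cst; near=> k.
rewrite partial_sum; suff -> : (n < k)%N by [].
by near: k; exact: nbhs_infty_gt.
Unshelve. all: by end_near. Qed.

Lemma in_lp_zero : in_lp p zero_seq.
Proof.
apply: (in_lp_dom (ltW p_gt0) _ (in_lp_unit_seq 0)) => n /=.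
by rewrite normr0.
Qed.

Lemma in_lp_truncate (N : nat) {x : rseq R} : in_lp p x -> in_lp p (truncate N x).
Proof.
apply: in_lp_dom (ltW p_gt0) _ => k; rewrite /truncate.
by case: ifP => // _; rewrite normr0.
Qed.

Lemma in_lp_tail (N : nat) {x : rseq R} : in_lp p x -> in_lp p (tail_from N x).
Proof.
apply: in_lp_dom (ltW p_gt0) _ => k; rewrite /tail_from.
by case: ifP => // _; rewrite normr0.
Qed.

Let series_nondecreasing {u : R ^nat} : (forall n, 0 <= u n) ->
  nondecreasing_seq (series u).
Proof. by move=> u0; apply/nondecreasing_seqP => n; rewrite seriesSr lerDl. Qed.

Let powRK {a : R} : 0 <= a -> (a `^ p) `^ p^-1 = a.
Proof. by move=> a0; rewrite -powRrM divff ?gt_eqF // powRr1. Qed.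

Lemma coord_le_lp_norm {y : rseq R} (m : nat) : in_lp p y -> `|y m| <= lp_norm p y.
Proof.
move=> hy; rewrite /lp_norm -(powRK (normr_ge0 (y m))).
have y_ge0 n : 0 <= `|y n| `^ p by exact: powR_ge0.
have term_le : `|y m| `^ p <= limn (series (fun n => `|y n| `^ p)).
  apply: le_trans (nondecreasing_cvgn_le (series_nondecreasing y_ge0) hy m.+1).
  by rewrite seriesSr lerDr; apply: sumr_ge0.
apply: ge0_ler_powR; rewrite ?nnegrE ?invr_ge0 ?powR_ge0 ?(ltW p_gt0) //.
exact: le_trans term_le.
Qed.

Let series_tail (x : rseq R) (N n : nat) :
  series (fun k => `|tail_from N x k| `^ p) n =
  series (fun k => `|x k| `^ p) (maxn n N) - series (fun k => `|x k| `^ p) N.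
Proof.
elim: n => [|n IH]; first by rewrite max0n subrr /series /= big_geq.
rewrite seriesSr IH /tail_from; case: (leqP N n) => Nn.
  by rewrite (maxn_idPl (leqW Nn)) seriesSr addrAC.
by rewrite normr0 powR0 ?gt_eqF // addr0 (maxn_idPr Nn).
Qed.

Lemma tail_small {x : rseq R} {d : R} : in_lp p x -> 0 < d ->
  exists N, lp_norm p (tail_from N x) <= d.
Proof.
move=> hx d0.
have x_ge0 n : 0 <= `|x n| `^ p by exact: powR_ge0.
set s := series (fun k => `|x k| `^ p) in hx *.
have /cvgrPdist_le/(_ _ (powR_gt0 p d0)) s_cauchy : s @ \oo --> limn s by [].
near \oo => N; exists N.
have hN : `|limn s - s N| <= d `^ p by near: N.
have ht := in_lp_tail N hx.
have t_ge0 n : 0 <= `|tail_from N x n| `^ p by exact: powR_ge0.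
have lim_ge0 : 0 <= limn (series (fun k => `|tail_from N x k| `^ p)).
  apply: le_trans (nondecreasing_cvgn_le (series_nondecreasing t_ge0) ht 0).
  by rewrite /series /= big_geq.
have lim_le : limn (series (fun k => `|tail_from N x k| `^ p)) <= limn s - s N.
  apply: limr_le => //; near=> n; rewrite series_tail lerD2r.
  exact: nondecreasing_cvgn_le (series_nondecreasing x_ge0) hx _.
rewrite /lp_norm -(powRK (ltW d0)).
apply: ge0_ler_powR; rewrite ?nnegrE ?invr_ge0 ?powR_ge0 ?(ltW p_gt0) //.
by apply: le_trans lim_le _; apply: le_trans hN; exact: ler_norm.
Unshelve. all: by end_near. Qed.

End LpSpace.

Section Operator.
Context {R : realType} {p : R} {T : rseq R -> rseq R}.
Hypotheses (p_gt0 : 0 < p) (hT : lp_operator p T).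

Lemma op_zero : T zero_seq = zero_seq.
Proof.
case: hT => _ Tlin _; have h0 := in_lp_zero p_gt0.
have := Tlin 1 _ _ h0 h0; rewrite /zero_seq; under eq_fun do rewrite mul1r addr0.
move=> T0_double; apply/funext => n; have := congr1 (fun f => f n) T0_double.
rewrite /= mul1r => h; lra.
Qed.

Lemma op_scale (c : R) {x : rseq R} : in_lp p x ->
  T (fun n => c * x n) = (fun n => c * T x n).
Proof.
move=> hx; have T0 := op_zero; case: hT => _ Tlin _.
have := Tlin c _ _ hx (in_lp_zero p_gt0); rewrite T0 /zero_seq.
under eq_fun do rewrite addr0.
by move=> ->; apply/funext => n; rewrite addr0.
Qed.

Lemma op_add {x y : rseq R} : in_lp p x -> in_lp p y ->
  T (fun n => x n + y n) = (fun n => T x n + T y n).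
Proof.
case: hT => _ Tlin _ hx hy; have := Tlin 1 _ _ hx hy.
under eq_fun do rewrite mul1r.
by move=> ->; apply/funext => n; rewrite mul1r.
Qed.

Lemma op_coord_bound : exists C : R, 0 <= C /\
  forall (y : rseq R) (m : nat), in_lp p y -> `|T y m| <= C * lp_norm p y.
Proof.
case: hT => Tlp _ [C TC]; exists `|C|; split=> // y m hy.
apply: le_trans (coord_le_lp_norm p_gt0 m (Tlp _ hy)) _.
apply: le_trans (TC _ hy) _.
by apply: ler_wpM2r; [exact: powR_ge0 | exact: ler_norm].
Qed.

Hypotheses (hpos : positive_op p T) (hip : interval_preserving p T).

(* Cutting T e_n down to
   a coordinate a gives an element of [0, T e_n] = T [0, e_n], hence a multiple
   of T e_n; it vanishes at b <> a, so T e_n b = 0. *)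
Lemma op_unit_support {n a b : nat} :
  T (unit_seq n) a != 0 -> T (unit_seq n) b != 0 -> a = b.
Proof.
move=> ha hb; apply/eqP/negPn/negP => ab.
have he := in_lp_unit_seq p_gt0 n.
have e_ge0 : seq_nonneg (unit_seq n : rseq R) by move=> k; rewrite /unit_seq ler0n.
have v_ge0 := hpos _ he e_ge0.
set v := T (unit_seq n) in ha hb v_ge0.
pose y : rseq R := fun k => if k == a then v a else 0.
have : order_interval v y by split => k; rewrite /y; case: eqP => [e|_]; rewrite ?e.
rewrite -hip // => -[z [z_ge0 z_le] Tz].
have zE : z = (fun k => z n * unit_seq n k).
  apply/funext => k; rewrite /unit_seq; case: eqP => [->|kn]; first by rewrite mulr1.
  rewrite mulr0; apply/le_anti; rewrite z_ge0 andbT.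
  by have := z_le k; rewrite /unit_seq; move/eqP/negbTE: kn => ->.
move: Tz; rewrite zE (op_scale (z n) he) => Tz.
have := congr1 (fun f => f b) Tz; have := congr1 (fun f => f a) Tz.
rewrite /y /= eqxx eq_sym (negbTE ab) => hya /eqP.
rewrite mulf_eq0 (negbTE hb) orbF => /eqP zn0.
by move: ha; rewrite -hya zn0 mul0r eqxx.
Qed.

Lemma op_support_map :
  exists s : nat -> nat, forall n m, T (unit_seq n) m != 0 -> m = s n.
Proof.
have support n : exists sn, forall m, T (unit_seq n) m != 0 -> m = sn.
  case: (pselect (exists m, T (unit_seq n) m != 0)) => [[a ha]|none].
  - by exists a => m hm; exact: op_unit_support hm ha.
  - by exists 0%N => m hm; exfalso; apply: none; exists m.
by have [s hs] := choice support; exists s.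
Qed.

End Operator.

Section Band.
Context {R : realType}.
Variables (p : R) (A : set nat).
Hypothesis p_gt0 : 0 < p.

Definition band : set (rseq R) := fun x => in_lp p x /\ forall m, ~ A m -> x m = 0.

Lemma band_ideal : lp_ideal p band.
Proof.
split; first split.
- by move=> x [].
- by split; [exact: in_lp_zero|].
- move=> a x y [hx x0] [hy y0]; split.
    exact: (in_lp_comb a (ltW p_gt0) hx hy).
  by move=> m Am; rewrite x0 // y0 // mulr0 addr0.
- move=> x y xy [hy y0]; split; first exact: in_lp_dom (ltW p_gt0) xy hy.
  move=> m Am; apply/normr0_eq0/le_anti; rewrite normr_ge0 andbT.
  by have := xy m; rewrite y0 // normr0.
Qed.

Let small_eq0 (a : R) : (forall e, 0 < e -> `|a| <= e) -> a = 0.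
Proof.
move=> H; apply/eqP/negPn/negP => a0.
have := H (`|a| / 2); rewrite divr_gt0 ?normr_gt0 // => /(_ isT) h.
have : 0 < `|a| by rewrite normr_gt0.
lra.
Qed.

(* Norm convergence implies coordinatewise convergence, so the band is closed. *)
Lemma band_closed : lp_closed p band.
Proof.
move=> u x hu hx cv; split => // m Am; apply: small_eq0 => e e0.
move/cvgrPdist_le: cv => /(_ _ e0) close.
near \oo => k.
have hk : `|0 - lp_norm p (fun n => u k n - x n)| <= e by near: k.
have [huk uk0] := hu k.
have hd : in_lp p (fun n => u k n - x n).
  have := in_lp_comb (-1) (ltW p_gt0) hx huk.
  by congr in_lp; apply/funext => n; rewrite mulN1r addrC.
have := coord_le_lp_norm p_gt0 m hd; rewrite uk0 // sub0r normrN => h.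
by apply: le_trans h _; apply: le_trans hk; rewrite sub0r normrN ler_norm.
Unshelve. all: by end_near. Qed.

Variable T : rseq R -> rseq R.
Hypothesis hT : lp_operator p T.
Hypothesis A_stable : forall n m, A n -> T (unit_seq n) m != 0 -> A m.

Lemma band_invariant_truncate {x : rseq R} {m : nat} : band x -> ~ A m ->
  forall N, T (truncate N x) m = 0 :> R.
Proof.
move=> [hx x0] Am; elim => [|N IH].
  have -> : truncate 0 x = zero_seq by apply/funext.
  by rewrite (op_zero p_gt0 hT).
rewrite truncateS; case: (hT) => _ Tlin _.
rewrite (Tlin _ _ _ (in_lp_unit_seq p_gt0 N) (in_lp_truncate p_gt0 N hx)) IH addr0.
case: (pselect (A N)) => AN; last by rewrite x0 // mul0r.
suff -> : T (unit_seq N) m = 0 by rewrite mulr0.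
by apply/eqP/negP => /negP /(A_stable _ _ AN).
Qed.

(* By continuity of T the band itself is T-invariant. *)
Lemma band_invariant : T_invariant T band.
Proof.
move=> x bx; have [hx _] := bx; case: (hT) => Tlp _ _.
split; first exact: Tlp.
move=> m Am; apply: small_eq0 => e e0.
have [C [C0 Cbound]] := op_coord_bound p_gt0 hT.
have C1 : 0 < C + 1 by rewrite ltr_wpDl.
have [N hN] := tail_small p_gt0 hx (divr_gt0 e0 C1).
rewrite (truncate_add_tail N x).
rewrite (op_add hT (in_lp_truncate p_gt0 N hx) (in_lp_tail p_gt0 N hx)) /=.
rewrite (band_invariant_truncate bx Am) add0r.
apply: le_trans (Cbound _ m (in_lp_tail p_gt0 N hx)) _.
have t_ge0 : 0 <= lp_norm p (tail_from N x) by exact: powR_ge0.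
have d_eq : e / (C + 1) * (C + 1) = e by rewrite mulfVK // gt_eqF.
have := ler_wpM2l C0 hN; nra.
Qed.

End Band.

Section Orbit.
Variable s : nat -> nat.

Definition orbit0 : set nat := fun m => exists k, m = iter k.+1 s 0%N.

Lemma orbit0_stable (n : nat) : orbit0 n -> orbit0 (s n).
Proof. by move=> [k ->]; exists k.+1. Qed.

Lemma iter_periodic (k : nat) : iter k.+1 s 0%N = 0%N ->
  forall i, exists2 j, (j <= k)%N & iter i s 0%N = iter j s 0%N.
Proof.
move=> period; elim => [|i [j jk IH]]; first by exists 0%N.
case: (ltnP j k) => jk'; first by exists j.+1 => //=; rewrite IH.
have jk_eq : j = k by apply/eqP; rewrite eqn_leq jk jk'.
by exists 0%N => //=; rewrite IH jk_eq.
Qed.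

Lemma orbit0_not_full : exists w, ~ orbit0 w.
Proof.
case: (pselect (orbit0 0%N)) => [[k hk]|not0]; last by exists 0%N.
exists (\sum_(j < k.+1) iter j s 0%N).+1 => -[i hi].
have [j jk ij] := iter_periodic _ (esym hk) i.+1.
have : (iter j s 0%N <= \sum_(j0 < k.+1) iter j0 s 0%N)%N.
  by rewrite (bigD1 (@Ordinal k.+1 j jk)) //= leq_addr.
by rewrite -ij -hi ltnn.
Qed.

End Orbit.

Theorem corollary3p7 (R : realType) (p : R) (T : rseq R -> rseq R) :
  1 < p -> lp_operator p T -> positive_op p T -> interval_preserving p T ->
  exists M : set (rseq R),
    [/\ lp_ideal p M, lp_closed p M, T_invariant T M & lp_nontrivial p M].
Proof.
move=> p1 hT hpos hip; have p_gt0 : 0 < p := lt_trans ltr01 p1.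
have [s hs] := op_support_map p_gt0 hT hpos hip.
have A_stable n m : orbit0 s n -> T (unit_seq n) m != 0 -> orbit0 s m.
  by move=> An /hs ->; exact: orbit0_stable.
have unit_in_band w : band p (orbit0 s) (unit_seq w) <-> orbit0 s w.
  split=> [[_ vanish]|Aw].
  - apply: contrapT => Aw; have := vanish w Aw.
    by rewrite /unit_seq eqxx => /eqP; rewrite oner_eq0.
  - split; first exact: (in_lp_unit_seq p_gt0 w).
    by move=> m Am; rewrite /unit_seq; case: eqP => // mw; move: Am; rewrite mw.
exists (band p (orbit0 s)); split.
- exact: band_ideal.
- exact: band_closed.
- exact: band_invariant.
- split.
  + exists (unit_seq (s 0%N)); split; first by apply/unit_in_band; exists 0%N.
    by move=> /(congr1 (fun f => f (s 0%N))); rewrite /unit_seq eqxx => /eqP; rewrite oner_eq0.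
  + have [w Aw] := orbit0_not_full s.
    by exists (unit_seq w); split; [exact: (in_lp_unit_seq p_gt0 w) | move/unit_in_band].
Qed.
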